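(* Let $f$ and $g$ be germs at $0\in\mathbb{C}$ of holomorphic functions of one variable with $v(f)\geq 3$ and $v(g)\geq 2$, and let $I=\big(f(z_1)-z_2z_3,\,g(z_2)\big)\subset\mathcal{O}_3$. Then $\mathbf{T}_2(I)\leq\max\{v(f),v(g)\}$ and $\beta_2(I)=\max\{v(f),\,v(g)(v(f)-1)\}=v(g)(v(f)-1)$.
   Context: $\mathcal{O}_n$ denotes the local ring of germs at $0\in\mathbb{C}^n$ of holomorphic functions. $\Gamma$ denotes the set of non-constant germs of holomorphic maps $z\colon(\mathbb{C},0)\to(\mathbb{C}^n,0)$; $v(z)$ is the order of vanishing of $z$ at $0$; for a one-variable germ $h$, $v(h)$ is its order of vanishing at $0$ ($v(0)=\infty$). For an ideal $I\subset\mathcal{O}_n$, $\mathbf{T}_1(I)=\sup_{z\in\Gamma}\inf_{h\in I}\frac{v(h\circ z)}{v(z)}$, and $\mathbf{T}_q(I)=\inf_{\{w_1,\dots,w_{q-1}\}}\mathbf{T}_1(I,w_1,\dots,w_{q-1})$ over all linear functions $w_j$, where $(I,w_1,\dots,w_{q-1})$ is the ideal generated by $I$ and the $w_j$. The generic value $\beta_q(I)$ is the unique $\beta\in\mathbb{R}\cup\{\infty\}$ such that there is a non-empty Zariski open subset $W$ of the Grassmannian $G^{n-q+1}$ of $(n-q+1)$-dimensional linear subspaces of $\mathbb{C}^n$ with $\mathbf{T}_1(I,w_1,\dots,w_{q-1})=\beta$ whenever $\{w_1=\dots=w_{q-1}=0\}\in W$. *)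

From Stdlib Require Import Reals ClassicalEpsilon List.
Import ListNotations.
Open Scope R_scope.

Definition C := (R * R)%type.
Definition C0 : C := (0, 0).
Definition C1 : C := (1, 0).
Definition Cadd (x y : C) : C := (fst x + fst y, snd x + snd y).
Definition Copp (x : C) : C := (- fst x, - snd x).
Definition Csub (x y : C) : C := Cadd x (Copp y).
Definition Cmul (x y : C) : C :=
  (fst x * fst y - snd x * snd y, fst x * snd y + snd x * fst y).
Definition Cnorm (x : C) : R := sqrt (fst x ^ 2 + snd x ^ 2).

Fixpoint csum (n : nat) (f : nat -> C) : C :=
  match n with O => C0 | S m => Cadd (csum m f) (f m) end.

Inductive ER := Fin (r : R) | PInf.
Definition ERle (x y : ER) : Prop :=
  match x, y with
  | Fin a, Fin b => a <= b
  | _, PInf => True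
  | PInf, Fin _ => False
  end.
Definition is_lub (S : ER -> Prop) (t : ER) : Prop :=
  (forall s, S s -> ERle s t) /\ (forall u, (forall s, S s -> ERle s u) -> ERle t u).
Definition is_glb (S : ER -> Prop) (t : ER) : Prop :=
  (forall s, S s -> ERle t s) /\ (forall u, (forall s, S s -> ERle u s) -> ERle u t).
Definition ER_sup (S : ER -> Prop) : ER := epsilon (inhabits PInf) (is_lub S).
Definition ER_inf (S : ER -> Prop) : ER := epsilon (inhabits PInf) (is_glb S).
Definition ERmin (x y : ER) : ER :=
  match x, y with
  | Fin a, Fin b => Fin (Rmin a b)
  | Fin a, PInf => Fin a
  | PInf, y => y
  end.
(* x / y, used only with y a finite positive integer (v(z) >= 1) *)
Definition ERdiv (x y : ER) : ER :=
  match x, y with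
  | Fin a, Fin b => Fin (a / b)
  | PInf, _ => PInf
  | Fin _, PInf => Fin 0
  end.

Definition ps1 := nat -> C.
Definition ps3 := nat -> nat -> nat -> C.

(* convergence = germ of holomorphic function at 0 *)
Definition conv1 (a : ps1) : Prop :=
  exists M r, 0 < r /\ forall k, Cnorm (a k) * r ^ k <= M.
Definition conv3 (c : ps3) : Prop :=
  exists M r, 0 < r /\ forall i j l, Cnorm (c i j l) * r ^ (i + j + l) <= M.

Definition vord (a : ps1) : ER :=
  epsilon (inhabits PInf) (fun t =>
    (t = PInf /\ forall k, a k = C0) \/
    (exists k, t = Fin (INR k) /\ a k <> C0 /\ forall j, (j < k)%nat -> a j = C0)).

Definition one1 : ps1 := fun k => if Nat.eqb k 0 then C1 else C0.
Definition mul1 (a b : ps1) : ps1 :=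
  fun k => csum (S k) (fun i => Cmul (a i) (b (k - i)%nat)).
Definition pow1 (a : ps1) (m : nat) : ps1 := Nat.iter m (mul1 a) one1.

Definition mul3 (a b : ps3) : ps3 :=
  fun i j l => csum (S i) (fun p => csum (S j) (fun q => csum (S l) (fun s =>
    Cmul (a p q s) (b (i - p)%nat (j - q)%nat (l - s)%nat)))).

(* h o z for z = (z1,z2,z3) with z_i(0) = 0 (then only finitely many
   monomials contribute to each coefficient) *)
Definition comp (h : ps3) (z1 z2 z3 : ps1) : ps1 :=
  fun k => csum (S k) (fun i => csum (S k) (fun j => csum (S k) (fun l =>
    Cmul (h i j l) (mul1 (mul1 (pow1 z1 i) (pow1 z2 j)) (pow1 z3 l) k)))).

Definition in_Gamma (z1 z2 z3 : ps1) : Prop :=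
  conv1 z1 /\ conv1 z2 /\ conv1 z3 /\
  z1 0%nat = C0 /\ z2 0%nat = C0 /\ z3 0%nat = C0 /\
  exists k, z1 k <> C0 \/ z2 k <> C0 \/ z3 k <> C0.

Definition vcurve (z1 z2 z3 : ps1) : ER := ERmin (vord z1) (ERmin (vord z2) (vord z3)).

Fixpoint lincomb (cs gs : list ps3) : ps3 :=
  match cs, gs with
  | c :: cs', g :: gs' => fun i j l => Cadd (mul3 c g i j l) (lincomb cs' gs' i j l)
  | _, _ => fun _ _ _ => C0
  end.
Definition in_ideal (gs : list ps3) (h : ps3) : Prop :=
  exists cs, length cs = length gs /\ Forall conv3 cs /\
    forall i j l, h i j l = lincomb cs gs i j l.

Definition T1 (gs : list ps3) : ER :=
  ER_sup (fun t => exists z1 z2 z3, in_Gamma z1 z2 z3 /\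
    t = ER_inf (fun s => exists h, in_ideal gs h /\
          s = ERdiv (vord (comp h z1 z2 z3)) (vcurve z1 z2 z3))).

Definition C3 := (C * C * C)%type.
Definition lin (a : C3) : ps3 :=
  fun i j l =>
    match i, j, l with
    | 1%nat, 0%nat, 0%nat => fst (fst a)
    | 0%nat, 1%nat, 0%nat => snd (fst a)
    | 0%nat, 0%nat, 1%nat => snd a
    | _, _, _ => C0
    end.

Definition Tq (q : nat) (gs : list ps3) : ER :=
  ER_inf (fun t => exists ws : list C3, length ws = (q - 1)%nat /\
    t = T1 (gs ++ map lin ws)).

(* ---------- generic value beta_2 for n = 3 ----------
   G^{n-q+1} = G^2(C^3): the plane {w = 0} with w = a.z, a <> 0, is identified
   with [a] in the dual projective plane P^2; Zariski open subsets are the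
   complements of common zero loci of finitely many homogeneous polynomials. *)
Definition poly3 := list (C * (nat * nat * nat)).
Definition Cpow (x : C) (n : nat) : C := Nat.iter n (Cmul x) C1.
Definition peval (P : poly3) (a : C3) : C :=
  fold_right (fun m acc =>
    let '(c, (i, j, l)) := m in
    Cadd (Cmul c (Cmul (Cpow (fst (fst a)) i)
                   (Cmul (Cpow (snd (fst a)) j) (Cpow (snd a) l)))) acc) C0 P.
Definition homogeneous (P : poly3) : Prop :=
  exists d, Forall (fun m : C * (nat * nat * nat) =>
    let '(_, (i, j, l)) := m in (i + j + l)%nat = d) P.
Definition C3zero : C3 := (C0, C0, C0).
Definition in_zopen (Ps : list poly3) (a : C3) : Prop :=
  exists P, In P Ps /\ peval P a <> C0.

Definition generic_value2 (gs : list ps3) (b : ER) : Prop :=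
  exists Ps : list poly3, Forall homogeneous Ps /\
    (exists a, a <> C3zero /\ in_zopen Ps a) /\
    forall a, a <> C3zero -> in_zopen Ps a -> T1 (gs ++ [lin a]) = b.

Definition beta2 (gs : list ps3) : ER := epsilon (inhabits PInf) (generic_value2 gs).

Definition gen_f (f : ps1) : ps3 :=
  fun i j l => Csub (if andb (Nat.eqb j 0) (Nat.eqb l 0) then f i else C0)
                    (if andb (Nat.eqb i 0) (andb (Nat.eqb j 1) (Nat.eqb l 1)) then C1 else C0).
Definition gen_g (g : ps1) : ps3 :=
  fun i j l => if andb (Nat.eqb i 0) (Nat.eqb l 0) then g j else C0.

(* Along a curve of order m, compare which coordinate attains the order.  With the linear form
   w = z3 this bounds the order of some element of (I, w) by max{v(f), v(g)} m.  For
   w = a1 z1 + a2 z2 + a3 z3 with a3 <> 0: if z2 has order <= (v(f) - 1) m then g(z2) has order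
   <= v(g) (v(f) - 1) m; otherwise either z3 (hence w) has order m, or f(z1) has order v(f) m while z2 z3 has larger
   order.  Conversely, if a1 a3 <> 0, the curve (t, z2, -(a1 t + a2 z2) / a3) with z2 solving
   a3 f(t) + z2 (a1 t + a2 z2) = 0 lies in {w = 0} and, to any prescribed order, in {f(z1) = z2 z3},
   while z2 has order v(f) - 1, so g(z2) has order >= v(g) (v(f) - 1).  As {a1 a3 <> 0} meets every
   nonempty Zariski open set, v(g) (v(f) - 1) is the generic value. *)

From Stdlib Require Import Reals List Lia Lra ClassicalEpsilon Classical FunctionalExtensionality.
Import ListNotations.
Open Scope R_scope.

Lemma C_ext (x y : C) : fst x = fst y -> snd x = snd y -> x = y.
Proof. destruct x, y; simpl; intros; subst; reflexivity. Qed.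

Lemma C_ring : ring_theory C0 C1 Cadd Cmul Csub Copp (@eq C).
Proof.
  constructor; intros; repeat match goal with x : C |- _ => destruct x end;
  unfold Cadd, Cmul, Csub, Copp, C0, C1; simpl; apply C_ext; simpl; ring.
Qed.
Add Ring C_ring : C_ring.

Lemma C1_neq0 : C1 <> C0.
Proof. unfold C1, C0; intro E; injection E; lra. Qed.

Lemma Cmul_neq0 (x y : C) : x <> C0 -> y <> C0 -> Cmul x y <> C0.
Proof.
  destruct x as [a b], y as [c d]; unfold Cmul, C0; simpl; intros Hx Hy H.
  injection H; intros H2 H1.
  assert (E : (a*a+b*b)*(c*c+d*d) = 0) by nra.
  apply Rmult_integral in E; destruct E as [E|E].
  - apply Hx; f_equal; nra.
  - apply Hy; f_equal; nra.
Qed.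

Definition Cinv (x : C) : C :=
  (fst x / (fst x ^ 2 + snd x ^ 2), - snd x / (fst x ^ 2 + snd x ^ 2)).

Lemma Cmul_Cinv (x : C) : x <> C0 -> Cmul x (Cinv x) = C1.
Proof.
  destruct x as [a b]; unfold Cmul, Cinv, C0, C1; simpl; intro H.
  assert (a*(a*1)+b*(b*1) <> 0) by (intro E; apply H; f_equal; nra).
  apply C_ext; simpl; field; simpl in *; lra || auto.
Qed.

Lemma Cpow_neq0 x n : x <> C0 -> Cpow x n <> C0.
Proof.
  intro H; induction n; simpl.
  - exact C1_neq0.
  - apply Cmul_neq0; auto.
Qed.

Lemma Cnorm_C0 : Cnorm C0 = 0.
Proof. unfold Cnorm, C0; simpl fst; simpl snd. replace (0 ^ 2 + 0 ^ 2) with 0 by ring. apply sqrt_0. Qed.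

Lemma csum_ext n F G : (forall i, (i < n)%nat -> F i = G i) -> csum n F = csum n G.
Proof. induction n; simpl; intros; auto. rewrite IHn, H; auto. Qed.

Lemma csum_0 n F : (forall i, (i < n)%nat -> F i = C0) -> csum n F = C0.
Proof. induction n; simpl; intros; auto. rewrite IHn, H; auto. ring. Qed.

Lemma csum_add n F G : csum n (fun i => Cadd (F i) (G i)) = Cadd (csum n F) (csum n G).
Proof. induction n; simpl. ring. rewrite IHn; ring. Qed.

Lemma csum_opp n F : csum n (fun i => Copp (F i)) = Copp (csum n F).
Proof. induction n; simpl. ring. rewrite IHn; ring. Qed.

Lemma csum_mul_l n F x : Cmul x (csum n F) = csum n (fun i => Cmul x (F i)).
Proof. induction n; simpl. ring. rewrite <- IHn; ring. Qed.

Lemma csum_mul_r n F x : Cmul (csum n F) x = csum n (fun i => Cmul (F i) x).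
Proof. induction n; simpl. ring. rewrite <- IHn; ring. Qed.

Lemma csum_only n m F : (m < n)%nat -> (forall i, (i < n)%nat -> i <> m -> F i = C0) ->
  csum n F = F m.
Proof.
  induction n; intros Hm H; simpl. lia.
  destruct (Nat.eq_dec m n).
  - subst. rewrite csum_0. ring. intros; apply H; lia.
  - rewrite IHn by (auto; lia). rewrite (H n) by lia. ring.
Qed.

Lemma csum_pad n K F : (n <= K)%nat -> (forall i, (n <= i < K)%nat -> F i = C0) ->
  csum K F = csum n F.
Proof.
  intros HK; induction HK; intros H; auto.
  simpl. rewrite IHHK by (intros; apply H; lia). rewrite (H m) by lia. ring.
Qed.

Lemma csum_swap n m F : csum n (fun i => csum m (fun j => F i j)) =
  csum m (fun j => csum n (fun i => F i j)).
Proof.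
  induction n; simpl. symmetry; apply csum_0; auto.
  rewrite IHn, <- csum_add. reflexivity.
Qed.

Lemma csum_Sl n F : csum (S n) F = Cadd (F O) (csum n (fun i => F (S i))).
Proof.
  induction n. simpl. ring.
  change (csum (S (S n)) F) with (Cadd (csum (S n) F) (F (S n))).
  rewrite IHn. simpl. ring.
Qed.

Lemma csum_rev n F : csum (S n) F = csum (S n) (fun i => F (n - i)%nat).
Proof.
  induction n. reflexivity.
  rewrite (csum_Sl (S n) (fun i => F (S n - i)%nat)).
  change (csum (S (S n)) F) with (Cadd (csum (S n) F) (F (S n))).
  rewrite IHn, Nat.sub_0_r, (Radd_comm C_ring). reflexivity.
Qed.

Lemma csum_triangle K G : csum K (fun u => csum (S u) (fun v => G v u)) =
  csum K (fun v => csum (K - v) (fun w => G v (v + w)%nat)).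
Proof.
  induction K. reflexivity.
  change (csum (S K) ?F) with (Cadd (csum K F) (F K)). rewrite IHK.
  rewrite (csum_ext K (fun v => csum (S K - v) (fun w => G v (v + w)%nat))
     (fun v => Cadd (csum (K - v) (fun w => G v (v + w)%nat)) (G v K))).
  2:{ intros i Hi. replace (S K - i)%nat with (S (K - i)) by lia. simpl. do 2 f_equal. lia. }
  rewrite csum_add. replace (S K - K)%nat with 1%nat by lia.
  simpl. rewrite Nat.add_0_r. ring.
Qed.

Lemma csum_cauchy K X : (forall p q, (K <= p + q)%nat -> X p q = C0) ->
  csum K (fun r => csum (S r) (fun p => X p (r - p)%nat)) =
  csum K (fun p => csum K (fun q => X p q)).
Proof.
  intros H. rewrite (csum_triangle K (fun v u => X v (u - v)%nat)).
  apply csum_ext; intros p Hp.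
  rewrite (csum_pad (K - p) K (fun q => X p q)) by (lia || (intros; apply H; lia)).
  apply csum_ext; intros. f_equal; lia.
Qed.

Lemma mul1_one_r a : mul1 a one1 = a.
Proof.
  apply functional_extensionality; intro k; unfold mul1.
  rewrite (csum_only (S k) k) by (lia || (intros i Hi Hne; unfold one1;
    destruct (Nat.eqb (k - i) 0) eqn:E; [apply Nat.eqb_eq in E; lia | ring])).
  rewrite Nat.sub_diag. unfold one1; simpl. ring.
Qed.

Lemma mul1_comm a b : mul1 a b = mul1 b a.
Proof.
  apply functional_extensionality; intro k; unfold mul1.
  rewrite csum_rev. apply csum_ext; intros i Hi.
  replace (k - (k - i))%nat with i by lia. ring.
Qed.

Lemma mul1_one_l a : mul1 one1 a = a.
Proof. rewrite mul1_comm; apply mul1_one_r. Qed.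

Lemma mul1_assoc a b c : mul1 (mul1 a b) c = mul1 a (mul1 b c).
Proof.
  apply functional_extensionality; intro k; unfold mul1.
  rewrite (csum_ext (S k) _ (fun u => csum (S u) (fun v =>
     Cmul (Cmul (a v) (b (u - v)%nat)) (c (k - u)%nat)))) by (intros; apply csum_mul_r).
  rewrite (csum_triangle (S k) (fun v u => Cmul (Cmul (a v) (b (u - v)%nat)) (c (k - u)%nat))).
  apply csum_ext; intros v Hv. rewrite csum_mul_l.
  replace (S k - v)%nat with (S (k - v)) by lia.
  apply csum_ext; intros w Hw. replace (v + w - v)%nat with w by lia.
  replace (k - (v + w))%nat with (k - v - w)%nat by lia. ring.
Qed.

Lemma mul1_left_comm x y z : mul1 x (mul1 y z) = mul1 y (mul1 x z).
Proof. rewrite <- !mul1_assoc, (mul1_comm x y). reflexivity. Qed.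

Lemma pow1_add a m n : pow1 a (m + n) = mul1 (pow1 a m) (pow1 a n).
Proof.
  induction m; simpl.
  - rewrite mul1_one_l. reflexivity.
  - change (mul1 a (pow1 a (m + n)) = mul1 (mul1 a (pow1 a m)) (pow1 a n)).
    rewrite IHm, mul1_assoc. reflexivity.
Qed.

Lemma mul1_leading a b m n : (forall j, (j < m)%nat -> a j = C0) -> (forall j, (j < n)%nat -> b j = C0) ->
  (forall k, (k < m + n)%nat -> mul1 a b k = C0) /\ mul1 a b (m + n)%nat = Cmul (a m) (b n).
Proof.
  intros Ha Hb.
  assert (Hab : forall k i, (i <= k <= m + n)%nat -> (k < m + n \/ i <> m)%nat ->
                 Cmul (a i) (b (k - i)%nat) = C0).
  { intros k i Hi Hk. destruct (Nat.lt_ge_cases i m).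
    - rewrite Ha by auto; ring.
    - rewrite Hb by lia; ring. }
  split.
  - intros k Hk; unfold mul1. apply csum_0; intros i Hi. apply Hab; [lia|now left].
  - unfold mul1. rewrite (csum_only _ m) by (lia || (intros i Hi Hne; apply Hab; [lia|now right])).
    do 2 f_equal; lia.
Qed.

Lemma mul1_vanish a b m n k : (forall j, (j < m)%nat -> a j = C0) ->
  (forall j, (j < n)%nat -> b j = C0) -> (k < m + n)%nat -> mul1 a b k = C0.
Proof. intros Ha Hb Hk. exact (proj1 (mul1_leading a b m n Ha Hb) k Hk). Qed.

Lemma pow1_leading z o : (forall j, (j < o)%nat -> z j = C0) -> forall i,
  (forall k, (k < i * o)%nat -> pow1 z i k = C0) /\ pow1 z i (i * o)%nat = Cpow (z o) i.
Proof.
  intros Hz i; induction i as [|i [H1 H2]].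
  - split. intros; simpl in *; lia. reflexivity.
  - destruct (mul1_leading z (pow1 z i) o (i * o) Hz H1) as [L1 L2].
    split.
    + intros k Hk; apply L1; simpl in Hk; lia.
    + replace (S i * o)%nat with (o + i * o)%nat by (simpl; lia).
      simpl. rewrite L2, H2. reflexivity.
Qed.

Lemma pow1_vanish z : z O = C0 -> forall i k, (k < i)%nat -> pow1 z i k = C0.
Proof.
  intros Hz i k Hk.
  assert (Hz1 : forall j, (j < 1)%nat -> z j = C0) by (intros j Hj; replace j with O by lia; exact Hz).
  apply (proj1 (pow1_leading z 1 Hz1 i)); lia.
Qed.

Lemma least_witness (P : nat -> Prop) : (exists n, P n) -> exists n, P n /\ forall j, (j < n)%nat -> ~ P j.
Proof.
  intros [n Hn]. revert Hn. induction n as [n IH] using (well_founded_induction Wf_nat.lt_wf). intros Hn.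
  destruct (classic (exists j, (j < n)%nat /\ P j)) as [[j [Hj Pj]]|NE].
  - apply (IH j Hj Pj).
  - exists n. split; auto. intros j Hj Pj. apply NE; eauto.
Qed.

Lemma vord_spec a : (vord a = PInf /\ forall k, a k = C0) \/
    (exists k, vord a = Fin (INR k) /\ a k <> C0 /\ forall j, (j < k)%nat -> a j = C0).
Proof.
  unfold vord. apply epsilon_spec.
  destruct (classic (forall k, a k = C0)) as [H|H].
  - exists PInf; left; auto.
  - apply not_all_ex_not in H. destruct (least_witness (fun k => a k <> C0) H) as [k [Hk Hl]].
    exists (Fin (INR k)); right; exists k; repeat split; auto.
    intros j Hj. apply NNPP. apply Hl; auto.
Qed.

Lemma vord_Fin_inv a p : vord a = Fin (INR p) -> a p <> C0 /\ forall j, (j < p)%nat -> a j = C0.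
Proof.
  intros E. destruct (vord_spec a) as [[E2 _]|[j [E2 [B D]]]]; rewrite E in E2. discriminate.
  injection E2; intro H. apply INR_eq in H. subst; auto.
Qed.

Lemma vord_le_index a k : a k <> C0 -> exists j, vord a = Fin (INR j) /\ (j <= k)%nat.
Proof.
  intros H. destruct (vord_spec a) as [[_ A]|[j [E [B D]]]]. elim H; auto.
  exists j; split; auto. destruct (Nat.le_gt_cases j k); auto. elim H; apply D; auto.
Qed.

Lemma vord_ge a N : (forall j, (j < N)%nat -> a j = C0) -> ERle (Fin (INR N)) (vord a).
Proof.
  intros H. destruct (vord_spec a) as [[E _]|[j [E [B D]]]]; rewrite E; simpl; auto.
  apply le_INR. destruct (Nat.le_gt_cases N j); auto. elim B; auto.
Qed.

Lemma vord_eq a m : a m <> C0 -> (forall j, (j < m)%nat -> a j = C0) -> vord a = Fin (INR m).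
Proof.
  intros Hm Hl. destruct (vord_le_index a m Hm) as [j [E Hj]]. rewrite E.
  destruct (Nat.eq_dec j m) as [->|Hne]; auto.
  elim (proj1 (vord_Fin_inv a j E)). apply Hl. lia.
Qed.

(** * Substituting a curve into a series in three variables *)

Definition at_origin (z1 z2 z3 : ps1) : Prop := z1 O = C0 /\ z2 O = C0 /\ z3 O = C0.

Definition monom (z1 z2 z3 : ps1) i j l : ps1 := mul1 (mul1 (pow1 z1 i) (pow1 z2 j)) (pow1 z3 l).

Definition csum3 K (F : nat -> nat -> nat -> C) : C :=
  csum K (fun i => csum K (fun j => csum K (fun l => F i j l))).

Lemma comp_csum3 h z1 z2 z3 k :
  comp h z1 z2 z3 k = csum3 (S k) (fun i j l => Cmul (h i j l) (monom z1 z2 z3 i j l k)).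
Proof. reflexivity. Qed.

Lemma monom_mul z1 z2 z3 i j l i' j' l' :
  mul1 (monom z1 z2 z3 i j l) (monom z1 z2 z3 i' j' l') = monom z1 z2 z3 (i + i') (j + j') (l + l').
Proof.
  unfold monom. rewrite !pow1_add, !mul1_assoc. f_equal.
  rewrite (mul1_left_comm (pow1 z3 l) (pow1 z1 i')), (mul1_left_comm (pow1 z2 j) (pow1 z1 i')),
    (mul1_left_comm (pow1 z3 l) (pow1 z2 j')).
  reflexivity.
Qed.

Lemma monom_vanish z1 z2 z3 i j l k : at_origin z1 z2 z3 ->
  (k < i + j + l)%nat -> monom z1 z2 z3 i j l k = C0.
Proof.
  intros [H1 [H2 H3]] Hk. unfold monom.
  destruct (mul1_leading (pow1 z1 i) (pow1 z2 j) i j (pow1_vanish z1 H1 i) (pow1_vanish z2 H2 j))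
    as [A _].
  destruct (mul1_leading _ (pow1 z3 l) (i + j) l A (pow1_vanish z3 H3 l)) as [B _].
  apply B; lia.
Qed.

Lemma csum3_ext K F G : (forall i j l, F i j l = G i j l) -> csum3 K F = csum3 K G.
Proof. intros; unfold csum3; apply csum_ext; intros; apply csum_ext; intros; apply csum_ext; auto. Qed.

Lemma csum3_0 K F : (forall i j l, F i j l = C0) -> csum3 K F = C0.
Proof. intros; unfold csum3; apply csum_0; intros; apply csum_0; intros; apply csum_0; auto. Qed.

Lemma csum3_add K F G :
  csum3 K (fun i j l => Cadd (F i j l) (G i j l)) = Cadd (csum3 K F) (csum3 K G).
Proof.
  unfold csum3. rewrite <- csum_add. apply csum_ext; intros.
  rewrite <- csum_add. apply csum_ext; intros. apply csum_add.
Qed.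

Lemma csum3_opp K F : csum3 K (fun i j l => Copp (F i j l)) = Copp (csum3 K F).
Proof.
  unfold csum3. rewrite <- csum_opp. apply csum_ext; intros.
  rewrite <- csum_opp. apply csum_ext; intros. apply csum_opp.
Qed.

Lemma csum3_pad K k F : (S k <= K)%nat -> (forall i j l, (k < i + j + l)%nat -> F i j l = C0) ->
  csum3 K F = csum3 (S k) F.
Proof.
  intros HK HF. unfold csum3.
  rewrite (csum_pad (S k) K) by (lia || (intros i Hi; apply csum_0; intros j Hj;
     apply csum_0; intros l Hl; apply HF; lia)).
  apply csum_ext; intros i Hi.
  rewrite (csum_pad (S k) K) by (lia || (intros j Hj; apply csum_0; intros l Hl; apply HF; lia)).
  apply csum_ext; intros j Hj.
  apply csum_pad. lia. intros l Hl; apply HF; lia.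
Qed.

Lemma comp_csum3_pad h z1 z2 z3 k K : at_origin z1 z2 z3 -> (S k <= K)%nat ->
  comp h z1 z2 z3 k = csum3 K (fun i j l => Cmul (h i j l) (monom z1 z2 z3 i j l k)).
Proof.
  intros Hz HK. rewrite (csum3_pad K k) by (auto; intros; rewrite monom_vanish by auto; ring).
  reflexivity.
Qed.

Lemma csum3_mul K A B : Cmul (csum3 K A) (csum3 K B) =
  csum3 K (fun i j l => csum3 K (fun i' j' l' => Cmul (A i j l) (B i' j' l'))).
Proof.
  unfold csum3. rewrite csum_mul_r. apply csum_ext; intros i _.
  rewrite csum_mul_r. apply csum_ext; intros j _.
  rewrite csum_mul_r. apply csum_ext; intros l _.
  rewrite csum_mul_l. apply csum_ext; intros i' _.
  rewrite csum_mul_l. apply csum_ext; intros j' _.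
  rewrite csum_mul_l. apply csum_ext; intros l' _. reflexivity.
Qed.

Lemma csum_csum3 n K F : csum n (fun u => csum3 K (fun i j l => F u i j l)) =
  csum3 K (fun i j l => csum n (fun u => F u i j l)).
Proof.
  unfold csum3. rewrite csum_swap. apply csum_ext; intros i _.
  rewrite csum_swap. apply csum_ext; intros j _. apply csum_swap.
Qed.

Lemma csum3_cauchy K X :
  (forall p1 p2 p3 q1 q2 q3, (K <= p1 + q1 + (p2 + q2) + (p3 + q3))%nat ->
     X p1 p2 p3 q1 q2 q3 = C0) ->
  csum3 K (fun r1 r2 r3 => csum (S r1) (fun p1 => csum (S r2) (fun p2 => csum (S r3) (fun p3 =>
     X p1 p2 p3 (r1 - p1)%nat (r2 - p2)%nat (r3 - p3)%nat)))) =
  csum3 K (fun p1 p2 p3 => csum3 K (fun q1 q2 q3 => X p1 p2 p3 q1 q2 q3)).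
Proof.
  intros HX. unfold csum3.
  (* interleave each outer index r_i with its convolution index p_i *)
  transitivity (csum K (fun r1 => csum (S r1) (fun p1 => csum K (fun r2 => csum (S r2) (fun p2 =>
     csum K (fun r3 => csum (S r3) (fun p3 => X p1 p2 p3 (r1 - p1)%nat (r2 - p2)%nat (r3 - p3)%nat))))))).
  { apply csum_ext; intros r1 _.
    rewrite (csum_ext K _ (fun r2 => csum (S r1) (fun p1 => csum K (fun r3 => csum (S r2) (fun p2 =>
        csum (S r3) (fun p3 => X p1 p2 p3 (r1 - p1)%nat (r2 - p2)%nat (r3 - p3)%nat))))))
      by (intros; apply csum_swap).
    rewrite csum_swap. apply csum_ext; intros p1 _. apply csum_ext; intros r2 _. apply csum_swap. }
  transitivity (csum K (fun p1 => csum K (fun q1 => csum K (fun p2 => csum K (fun q2 =>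
     csum K (fun p3 => csum K (fun q3 => X p1 p2 p3 q1 q2 q3))))))).
  { rewrite (csum_ext K _ (fun r1 => csum (S r1) (fun p1 => csum K (fun p2 => csum K (fun q2 =>
     csum K (fun p3 => csum K (fun q3 => X p1 p2 p3 (r1 - p1)%nat q2 q3))))))).
    2:{ intros r1 _. apply csum_ext; intros p1 _.
        rewrite (csum_ext K _ (fun r2 => csum (S r2) (fun p2 => csum K (fun p3 => csum K (fun q3 =>
           X p1 p2 p3 (r1 - p1)%nat (r2 - p2)%nat q3)))))
          by (intros; apply csum_ext; intros;
              apply (csum_cauchy K (fun p3 q3 => X p1 _ p3 _ _ q3)); intros; apply HX; lia).
        apply (csum_cauchy K (fun p2 q2 => csum K (fun p3 => csum K (fun q3 =>
           X p1 p2 p3 (r1 - p1)%nat q2 q3)))).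
        intros; apply csum_0; intros; apply csum_0; intros; apply HX; lia. }
    apply (csum_cauchy K (fun p1 q1 => csum K (fun p2 => csum K (fun q2 =>
       csum K (fun p3 => csum K (fun q3 => X p1 p2 p3 q1 q2 q3)))))).
    intros; repeat (apply csum_0; intros); apply HX; lia. }
  apply csum_ext; intros p1 _.
  rewrite (csum_ext K _ (fun q1 => csum K (fun p2 => csum K (fun p3 => csum K (fun q2 => csum K (fun q3 =>
     X p1 p2 p3 q1 q2 q3)))))) by (intros; apply csum_ext; intros; apply csum_swap).
  rewrite csum_swap. apply csum_ext; intros p2 _. rewrite csum_swap. reflexivity.
Qed.

Lemma comp_mul a b z1 z2 z3 k : at_origin z1 z2 z3 ->
  comp (mul3 a b) z1 z2 z3 k = mul1 (comp a z1 z2 z3) (comp b z1 z2 z3) k.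
Proof.
  intros Hz. set (K := S k).
  set (X := fun p1 p2 p3 q1 q2 q3 => Cmul (Cmul (a p1 p2 p3) (b q1 q2 q3))
        (monom z1 z2 z3 (p1 + q1) (p2 + q2) (p3 + q3) k)).
  transitivity (csum3 K (fun p1 p2 p3 => csum3 K (fun q1 q2 q3 => X p1 p2 p3 q1 q2 q3))).
  - rewrite comp_csum3, <- csum3_cauchy
      by (intros; unfold X; rewrite monom_vanish by (auto; unfold K in *; lia); ring).
    apply csum3_ext; intros r1 r2 r3. unfold mul3.
    rewrite csum_mul_r. apply csum_ext; intros p1 Hp1.
    rewrite csum_mul_r. apply csum_ext; intros p2 Hp2.
    rewrite csum_mul_r. apply csum_ext; intros p3 Hp3.
    unfold X. repeat f_equal; lia.
  - unfold mul1 at 1.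
    rewrite (csum_ext (S k) _ (fun u => csum3 K (fun p1 p2 p3 => csum3 K (fun q1 q2 q3 =>
       Cmul (Cmul (a p1 p2 p3) (monom z1 z2 z3 p1 p2 p3 u))
            (Cmul (b q1 q2 q3) (monom z1 z2 z3 q1 q2 q3 (k - u)%nat))))))
      by (intros u Hu; rewrite (comp_csum3_pad a z1 z2 z3 u K), (comp_csum3_pad b z1 z2 z3 (k - u) K)
            by (auto; unfold K; lia); apply csum3_mul).
    rewrite csum_csum3. apply csum3_ext; intros p1 p2 p3. rewrite csum_csum3.
    apply csum3_ext; intros q1 q2 q3. unfold X. rewrite <- monom_mul. unfold mul1.
    rewrite csum_mul_l. apply csum_ext; intros; ring.
Qed.

Lemma comp_ext x y z1 z2 z3 k : (forall i j l, x i j l = y i j l) ->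
  comp x z1 z2 z3 k = comp y z1 z2 z3 k.
Proof. intros H; rewrite !comp_csum3; apply csum3_ext; intros; rewrite H; auto. Qed.

Lemma comp_0 z1 z2 z3 k : comp (fun _ _ _ => C0) z1 z2 z3 k = C0.
Proof. rewrite comp_csum3. apply csum3_0; intros; ring. Qed.

Lemma comp_add x y z1 z2 z3 k :
  comp (fun i j l => Cadd (x i j l) (y i j l)) z1 z2 z3 k = Cadd (comp x z1 z2 z3 k) (comp y z1 z2 z3 k).
Proof. rewrite !comp_csum3, <- csum3_add. apply csum3_ext; intros; ring. Qed.

Lemma comp_sub x y z1 z2 z3 k :
  comp (fun i j l => Csub (x i j l) (y i j l)) z1 z2 z3 k = Csub (comp x z1 z2 z3 k) (comp y z1 z2 z3 k).
Proof.
  unfold Csub. rewrite comp_add, !comp_csum3, <- csum3_opp. f_equal.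
  apply csum3_ext; intros; ring.
Qed.

Lemma csum3_only K P1 P2 P3 F : (P1 < K)%nat -> (P2 < K)%nat -> (P3 < K)%nat ->
  (forall i j l, (i <> P1 \/ j <> P2 \/ l <> P3) -> F i j l = C0) -> csum3 K F = F P1 P2 P3.
Proof.
  intros H1 H2 H3 HF. unfold csum3.
  rewrite (csum_only K P1) by (auto; intros; apply csum_0; intros; apply csum_0; intros; apply HF; auto).
  rewrite (csum_only K P2) by (auto; intros; apply csum_0; intros; apply HF; auto).
  apply csum_only; auto.
Qed.

Lemma csum3_axis1 K F : (0 < K)%nat -> (forall i j l, (j <> O \/ l <> O) -> F i j l = C0) ->
  csum3 K F = csum K (fun i => F i O O).
Proof.
  intros HK HF. unfold csum3. apply csum_ext; intros i _.
  rewrite (csum_only K O) by (auto; intros; apply csum_0; intros; apply HF; auto).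
  apply csum_only; auto.
Qed.

Lemma csum3_axis2 K F : (0 < K)%nat -> (forall i j l, (i <> O \/ l <> O) -> F i j l = C0) ->
  csum3 K F = csum K (fun j => F O j O).
Proof.
  intros HK HF. unfold csum3.
  rewrite (csum_only K O) by (auto; intros; apply csum_0; intros; apply csum_0; intros; apply HF; auto).
  apply csum_ext; intros j _. apply csum_only; auto.
Qed.

Definition delta3 P1 P2 P3 (x : C) : ps3 := fun i j l =>
  if andb (Nat.eqb i P1) (andb (Nat.eqb j P2) (Nat.eqb l P3)) then x else C0.

Lemma comp_delta3 P1 P2 P3 x z1 z2 z3 k : at_origin z1 z2 z3 ->
  comp (delta3 P1 P2 P3 x) z1 z2 z3 k = Cmul x (monom z1 z2 z3 P1 P2 P3 k).
Proof.
  intros Hz. rewrite (comp_csum3_pad _ _ _ _ k (S (k + P1 + P2 + P3))) by (auto; lia).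
  rewrite (csum3_only _ P1 P2 P3) by (try lia; intros i j l Hne; unfold delta3;
    destruct (Nat.eqb i P1) eqn:E1, (Nat.eqb j P2) eqn:E2, (Nat.eqb l P3) eqn:E3; simpl; try ring;
    apply Nat.eqb_eq in E1; apply Nat.eqb_eq in E2; apply Nat.eqb_eq in E3; lia).
  unfold delta3. rewrite !Nat.eqb_refl. reflexivity.
Qed.

Definition series_in_z1 (f : ps1) : ps3 :=
  fun i j l => if andb (Nat.eqb j 0) (Nat.eqb l 0) then f i else C0.

Lemma comp_series_in_z1 f z1 z2 z3 k :
  comp (series_in_z1 f) z1 z2 z3 k = csum (S k) (fun i => Cmul (f i) (pow1 z1 i k)).
Proof.
  rewrite comp_csum3, csum3_axis1 by (try lia; intros i j l Hne; unfold series_in_z1;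
    destruct (Nat.eqb j 0) eqn:E1, (Nat.eqb l 0) eqn:E2; simpl; try ring;
    apply Nat.eqb_eq in E1; apply Nat.eqb_eq in E2; lia).
  apply csum_ext; intros. unfold monom. simpl. rewrite !mul1_one_r. reflexivity.
Qed.

Lemma comp_gen_g g z1 z2 z3 k :
  comp (gen_g g) z1 z2 z3 k = csum (S k) (fun j => Cmul (g j) (pow1 z2 j k)).
Proof.
  rewrite comp_csum3, csum3_axis2 by (try lia; intros i j l Hne; unfold gen_g;
    destruct (Nat.eqb i 0) eqn:E1, (Nat.eqb l 0) eqn:E2; simpl; try ring;
    apply Nat.eqb_eq in E1; apply Nat.eqb_eq in E2; lia).
  apply csum_ext; intros. unfold monom. simpl. rewrite mul1_one_r, mul1_one_l. reflexivity.
Qed.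

Lemma comp_gen_f f z1 z2 z3 k : at_origin z1 z2 z3 ->
  comp (gen_f f) z1 z2 z3 k = Csub (csum (S k) (fun i => Cmul (f i) (pow1 z1 i k))) (mul1 z2 z3 k).
Proof.
  intros Hz. unfold gen_f.
  rewrite (comp_sub (series_in_z1 f) (delta3 0 1 1 C1)), comp_series_in_z1, comp_delta3 by auto.
  unfold monom. simpl. rewrite !mul1_one_r, mul1_one_l. f_equal. ring.
Qed.

Lemma comp_lin a z1 z2 z3 k : at_origin z1 z2 z3 ->
  comp (lin a) z1 z2 z3 k =
  Cadd (Cmul (fst (fst a)) (z1 k)) (Cadd (Cmul (snd (fst a)) (z2 k)) (Cmul (snd a) (z3 k))).
Proof.
  intros Hz.
  rewrite (comp_ext (lin a) (fun i j l => Cadd (delta3 1 0 0 (fst (fst a)) i j l)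
     (Cadd (delta3 0 1 0 (snd (fst a)) i j l) (delta3 0 0 1 (snd a) i j l)))).
  2:{ intros i j l. unfold lin, delta3.
      destruct i as [|[|i]], j as [|[|j]], l as [|[|l]]; simpl; ring. }
  rewrite !comp_add, !comp_delta3 by auto. unfold monom. simpl.
  rewrite !mul1_one_r, !mul1_one_l. reflexivity.
Qed.

Definition one3 : ps3 := delta3 0 0 0 C1.
Definition zero3 : ps3 := fun _ _ _ => C0.

Lemma conv3_one3 : conv3 one3.
Proof.
  exists 1, 1. split. lra. intros i j l. rewrite Rfunctions.pow1, Rmult_1_r.
  unfold one3, delta3. destruct (andb _ _).
  - unfold Cnorm, C1; simpl fst; simpl snd. replace (1 ^ 2 + 0 ^ 2) with 1 by ring.
    rewrite sqrt_1; lra.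
  - rewrite Cnorm_C0. lra.
Qed.

Lemma conv3_zero3 : conv3 zero3.
Proof. exists 0, 1. split. lra. intros. unfold zero3. rewrite Cnorm_C0. lra. Qed.

Lemma mul3_one3 x i j l : mul3 one3 x i j l = x i j l.
Proof.
  unfold mul3, one3, delta3.
  rewrite (csum_only (S i) 0) by (lia || (intros i0 _ Hne; apply csum_0; intros; apply csum_0;
      intros; rewrite (proj2 (Nat.eqb_neq i0 0) Hne); simpl; ring)).
  rewrite (csum_only (S j) 0) by (lia || (intros j0 _ Hne; apply csum_0;
      intros; rewrite (proj2 (Nat.eqb_neq j0 0) Hne); simpl; ring)).
  rewrite (csum_only (S l) 0) by (lia || (intros l0 _ Hne;
      rewrite (proj2 (Nat.eqb_neq l0 0) Hne); simpl; ring)).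
  simpl. rewrite !Nat.sub_0_r. ring.
Qed.

Lemma mul3_zero3 x i j l : mul3 zero3 x i j l = C0.
Proof. unfold mul3, zero3. repeat (apply csum_0; intros). ring. Qed.

Lemma in_ideal_1 g1 g2 g3 : in_ideal [g1; g2; g3] g1.
Proof.
  exists [one3; zero3; zero3]. repeat split; auto.
  - repeat constructor; auto using conv3_one3, conv3_zero3.
  - intros; simpl. rewrite mul3_one3, !mul3_zero3. ring.
Qed.

Lemma in_ideal_2 g1 g2 g3 : in_ideal [g1; g2; g3] g2.
Proof.
  exists [zero3; one3; zero3]. repeat split; auto.
  - repeat constructor; auto using conv3_one3, conv3_zero3.
  - intros; simpl. rewrite mul3_one3, !mul3_zero3. ring.
Qed.

Lemma in_ideal_3 g1 g2 g3 : in_ideal [g1; g2; g3] g3.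
Proof.
  exists [zero3; zero3; one3]. repeat split; auto.
  - repeat constructor; auto using conv3_one3, conv3_zero3.
  - intros; simpl. rewrite mul3_one3, !mul3_zero3. ring.
Qed.

Lemma in_ideal_comp_vanish g1 g2 g3 h z1 z2 z3 N : at_origin z1 z2 z3 -> in_ideal [g1; g2; g3] h ->
  (forall k, (k < N)%nat -> comp g1 z1 z2 z3 k = C0) ->
  (forall k, (k < N)%nat -> comp g2 z1 z2 z3 k = C0) ->
  (forall k, (k < N)%nat -> comp g3 z1 z2 z3 k = C0) ->
  forall k, (k < N)%nat -> comp h z1 z2 z3 k = C0.
Proof.
  intros Hz [cs [Hl [_ Hh]]] V1 V2 V3 k Hk.
  destruct cs as [|c1 [|c2 [|c3 [|c4 cs]]]]; simpl in Hl; try discriminate.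
  rewrite (comp_ext _ _ z1 z2 z3 k Hh). simpl.
  rewrite !comp_add, !comp_mul, comp_0 by auto.
  rewrite !(mul1_vanish _ _ 0 N) by (auto; intros; lia). ring.
Qed.

Lemma ERle_trans x y z : ERle x y -> ERle y z -> ERle x z.
Proof. destruct x, y, z; simpl; auto; intros; try lra; contradiction. Qed.

Lemma ERle_antisym x y : ERle x y -> ERle y x -> x = y.
Proof. destruct x, y; simpl; intros; auto; try contradiction. f_equal; lra. Qed.

Lemma is_glb_exists (S : ER -> Prop) c : (forall s, S s -> ERle (Fin c) s) -> exists t, is_glb S t.
Proof.
  intros Hc.
  destruct (classic (exists r, S (Fin r))) as [[r0 Hr0]|NE].
  - destruct (completeness (fun x => S (Fin (- x)))) as [l [L1 L2]].
    + exists (- c). intros x Hx. specialize (Hc _ Hx). simpl in Hc. lra.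
    + exists (- r0). rewrite Ropp_involutive. auto.
    + exists (Fin (- l)). split.
      * intros [r|] Hs; simpl; auto.
        assert (L3 : S (Fin (- - r))) by (rewrite Ropp_involutive; auto).
        specialize (L1 _ L3). lra.
      * intros [b|] Hu; simpl.
        -- assert (l <= - b) by (apply L2; intros x Hx; specialize (Hu _ Hx); simpl in Hu; lra).
           lra.
        -- exact (Hu _ Hr0).
  - exists PInf. split.
    + intros [r|] Hs; simpl; auto. elim NE; eauto.
    + intros u _. destruct u; simpl; auto.
Qed.

Lemma is_lub_exists (S : ER -> Prop) : (exists s, S s) -> exists t, is_lub S t.
Proof.
  intros [s0 Hs0].
  destruct (classic (S PInf)) as [HP|HP].
  { exists PInf; split. intros [r|] _; simpl; auto. intros u Hu. apply Hu; auto. }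
  destruct (classic (exists b, forall r, S (Fin r) -> r <= b)) as [[b Hb]|NB].
  - destruct (completeness (fun x => S (Fin x))) as [l [L1 L2]].
    + exists b. intros x Hx. auto.
    + destruct s0 as [r|]. exists r; auto. contradiction.
    + exists (Fin l). split.
      * intros [r|] Hs; simpl. apply L1; auto. contradiction.
      * intros [u|] Hu; simpl; auto. apply L2. intros x Hx. exact (Hu _ Hx).
  - exists PInf. split. intros [r|] _; simpl; auto.
    intros [u|] Hu; simpl; auto. elim NB. exists u. intros r Hr. exact (Hu _ Hr).
Qed.

Lemma ER_inf_spec S c : (forall s, S s -> ERle (Fin c) s) -> is_glb S (ER_inf S).
Proof. intros H. unfold ER_inf. apply epsilon_spec. eapply is_glb_exists; eauto. Qed.

Lemma ER_sup_spec S : (exists s, S s) -> is_lub S (ER_sup S).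
Proof. intros H. unfold ER_sup. apply epsilon_spec. apply is_lub_exists; auto. Qed.

Lemma in_Gamma_at_origin z1 z2 z3 : in_Gamma z1 z2 z3 -> at_origin z1 z2 z3.
Proof. intros (_ & _ & _ & H1 & H2 & H3 & _). repeat split; auto. Qed.

Lemma in_Gamma_order z1 z2 z3 : in_Gamma z1 z2 z3 -> exists m, (1 <= m)%nat /\
  (forall j, (j < m)%nat -> z1 j = C0 /\ z2 j = C0 /\ z3 j = C0) /\
  (z1 m <> C0 \/ z2 m <> C0 \/ z3 m <> C0) /\ vcurve z1 z2 z3 = Fin (INR m).
Proof.
  intros (_ & _ & _ & H1 & H2 & H3 & Hex).
  destruct (least_witness _ Hex) as [m [Hm Hl]].
  assert (Hz : forall j, (j < m)%nat -> z1 j = C0 /\ z2 j = C0 /\ z3 j = C0).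
  { intros j Hj. specialize (Hl j Hj). repeat split; apply NNPP; intro; apply Hl; auto. }
  exists m. assert (1 <= m)%nat.
  { destruct m; auto. rewrite H1, H2, H3 in Hm. intuition. lia. }
  split; [auto|split; [exact Hz|split; [exact Hm|]]].
  assert (G1 := vord_ge z1 m (fun j Hj => proj1 (Hz j Hj))).
  assert (G2 := vord_ge z2 m (fun j Hj => proj1 (proj2 (Hz j Hj)))).
  assert (G3 := vord_ge z3 m (fun j Hj => proj2 (proj2 (Hz j Hj)))).
  assert (Hmin : forall u v, ERle (Fin (INR m)) u -> ERle (Fin (INR m)) v ->
     (u = Fin (INR m) \/ v = Fin (INR m)) -> ERmin u v = Fin (INR m)).
  { intros [u|] [v|] Hu Hv [E|E]; simpl in *; try discriminate; auto;
    injection E; intro; subst; f_equal; [apply Rmin_left|apply Rmin_right]; auto. }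
  unfold vcurve. apply Hmin; auto.
  - destruct (vord z2), (vord z3); simpl in *; auto; try contradiction. apply Rmin_glb; auto.
  - destruct Hm as [A|[A|A]].
    + left. apply vord_eq; auto. intros; apply Hz; auto.
    + right. apply Hmin; auto. left; apply vord_eq; auto; intros; apply Hz; auto.
    + right. apply Hmin; auto. right; apply vord_eq; auto; intros; apply Hz; auto.
Qed.

Lemma conv1_of_finite a D : (forall k, (D < k)%nat -> a k = C0) -> conv1 a.
Proof.
  intros H.
  assert (B : exists M, forall k, (k <= D)%nat -> Cnorm (a k) <= M).
  { clear H. induction D as [|D [M HM]].
    - exists (Cnorm (a O)). intros k Hk. replace k with O by lia. lra.
    - exists (Rmax M (Cnorm (a (S D)))). intros k Hk.
      destruct (Nat.eq_dec k (S D)). subst; apply Rmax_r.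
      eapply Rle_trans; [apply HM; lia|apply Rmax_l]. }
  destruct B as [M HM]. exists (Rmax M 0), 1. split. lra. intros k.
  rewrite Rfunctions.pow1, Rmult_1_r. destruct (Nat.le_gt_cases k D).
  - eapply Rle_trans; [apply HM; auto|apply Rmax_l].
  - rewrite H, Cnorm_C0 by auto. apply Rmax_r.
Qed.

Definition var1 : ps1 := fun k => if Nat.eqb k 1 then C1 else C0.
Definition zero1 : ps1 := fun _ => C0.

Lemma conv1_var1 : conv1 var1.
Proof.
  apply (conv1_of_finite _ 1). intros k Hk; unfold var1.
  rewrite (proj2 (Nat.eqb_neq k 1)) by lia. reflexivity.
Qed.

Lemma var1_1 : var1 1%nat <> C0.
Proof. exact C1_neq0. Qed.

Lemma in_Gamma_var1 : in_Gamma var1 zero1 zero1.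
Proof.
  assert (conv1 zero1) by (apply (conv1_of_finite _ 0); auto).
  repeat split; auto using conv1_var1. exists 1%nat. left. exact var1_1.
Qed.

Definition T1_at gs z1 z2 z3 : ER := ER_inf (fun s => exists h, in_ideal gs h /\
   s = ERdiv (vord (comp h z1 z2 z3)) (vcurve z1 z2 z3)).

Lemma ERdiv_vcurve_ge0 z1 z2 z3 x : in_Gamma z1 z2 z3 ->
  ERle (Fin 0) (ERdiv (vord x) (vcurve z1 z2 z3)).
Proof.
  intros HG. destruct (in_Gamma_order _ _ _ HG) as [m [Hm [_ [_ E]]]]. rewrite E.
  destruct (vord_spec x) as [[E2 _]|[j [E2 _]]]; rewrite E2; simpl; auto.
  apply le_INR in Hm. simpl in Hm. unfold Rdiv. apply Rmult_le_pos.
  - apply pos_INR.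
  - left; apply Rinv_0_lt_compat; lra.
Qed.

Lemma T1_at_spec gs z1 z2 z3 : in_Gamma z1 z2 z3 -> is_glb (fun s => exists h, in_ideal gs h /\
   s = ERdiv (vord (comp h z1 z2 z3)) (vcurve z1 z2 z3)) (T1_at gs z1 z2 z3).
Proof.
  intros HG. apply (ER_inf_spec _ 0). intros s [h [_ ->]]. apply ERdiv_vcurve_ge0; auto.
Qed.

Lemma T1_at_le gs z1 z2 z3 N : in_Gamma z1 z2 z3 ->
  (exists h, in_ideal gs h /\ ERle (ERdiv (vord (comp h z1 z2 z3)) (vcurve z1 z2 z3)) N) ->
  ERle (T1_at gs z1 z2 z3) N.
Proof.
  intros HG [h [Hh Hle]]. eapply ERle_trans; [|exact Hle].
  apply (proj1 (T1_at_spec gs _ _ _ HG)). eauto.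
Qed.

Lemma T1_at_ge gs z1 z2 z3 N : in_Gamma z1 z2 z3 ->
  (forall h, in_ideal gs h -> ERle N (ERdiv (vord (comp h z1 z2 z3)) (vcurve z1 z2 z3))) ->
  ERle N (T1_at gs z1 z2 z3).
Proof.
  intros HG H. apply (proj2 (T1_at_spec gs _ _ _ HG)).
  intros s [h [Hh ->]]; auto.
Qed.

Lemma T1_eq gs :
  T1 gs = ER_sup (fun t => exists z1 z2 z3, in_Gamma z1 z2 z3 /\ t = T1_at gs z1 z2 z3).
Proof. reflexivity. Qed.

Lemma T1_le gs N : (forall z1 z2 z3, in_Gamma z1 z2 z3 -> ERle (T1_at gs z1 z2 z3) N) ->
  ERle (T1 gs) N.
Proof.
  intros H. rewrite T1_eq. apply ER_sup_spec.
  - exists (T1_at gs var1 zero1 zero1), var1, zero1, zero1. split; auto using in_Gamma_var1.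
  - intros s [z1 [z2 [z3 [HG ->]]]]. auto.
Qed.

Lemma T1_ge gs N : (exists z1 z2 z3, in_Gamma z1 z2 z3 /\ ERle N (T1_at gs z1 z2 z3)) ->
  ERle N (T1 gs).
Proof.
  intros [z1 [z2 [z3 [HG H]]]]. eapply ERle_trans; [exact H|]. rewrite T1_eq. apply ER_sup_spec.
  - exists (T1_at gs z1 z2 z3), z1, z2, z3; auto.
  - eauto.
Qed.

Lemma T1_ge0 gs : ERle (Fin 0) (T1 gs).
Proof.
  apply T1_ge. exists var1, zero1, zero1. split; [apply in_Gamma_var1|].
  apply T1_at_ge; [apply in_Gamma_var1|]. intros; apply ERdiv_vcurve_ge0, in_Gamma_var1.
Qed.

Lemma T1_at_le_witness gs z1 z2 z3 m N : in_Gamma z1 z2 z3 ->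
  (1 <= m)%nat -> vcurve z1 z2 z3 = Fin (INR m) ->
  (exists h j, in_ideal gs h /\ comp h z1 z2 z3 j <> C0 /\ (j <= N * m)%nat) ->
  ERle (T1_at gs z1 z2 z3) (Fin (INR N)).
Proof.
  intros HG Hm E [h [j [Hh [Hj HjN]]]]. apply T1_at_le; auto. exists h; split; auto.
  rewrite E. destruct (vord_le_index _ j Hj) as [j' [E' Hj']]. rewrite E'. simpl.
  assert (Hm' : 0 < INR m) by (apply lt_0_INR; lia).
  assert (INR j' <= INR N * INR m) by (rewrite <- mult_INR; apply le_INR; lia).
  apply (Rmult_le_reg_r (INR m)); auto. unfold Rdiv. rewrite Rmult_assoc, Rinv_l by lra. lra.
Qed.

(** * Upper bounds *)

Lemma first_nonzero (z : ps1) j : z O = C0 -> z j <> C0 ->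
  exists o, (1 <= o <= j)%nat /\ z o <> C0 /\ forall i, (i < o)%nat -> z i = C0.
Proof.
  intros H0 Hj. destruct (least_witness (fun i => z i <> C0)) as [o [Ho Hlt]]; eauto.
  exists o. repeat split; auto.
  - destruct o; [contradiction|lia].
  - destruct (Nat.le_gt_cases o j); auto. elim (Hlt j); auto.
  - intros i Hi. apply NNPP, Hlt, Hi.
Qed.

Lemma series_comp_leading f z o p : (1 <= o)%nat -> (forall j, (j < o)%nat -> z j = C0) ->
  (forall i, (i < p)%nat -> f i = C0) ->
  (forall k, (k < p * o)%nat -> csum (S k) (fun i => Cmul (f i) (pow1 z i k)) = C0) /\
  csum (S (p * o)) (fun i => Cmul (f i) (pow1 z i (p * o)%nat)) = Cmul (f p) (Cpow (z o) p).
Proof.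
  intros Ho Hz Hf.
  assert (Hterm : forall k i, (k <= p * o)%nat -> (k < p * o \/ i <> p)%nat ->
                  Cmul (f i) (pow1 z i k) = C0).
  { intros k i Hk Hne. destruct (Nat.lt_ge_cases i p).
    - rewrite Hf by auto; ring.
    - rewrite (proj1 (pow1_leading z o Hz i)). ring. nia. }
  split.
  - intros k Hk. apply csum_0; intros i Hi. apply Hterm; [lia|now left].
  - rewrite (csum_only _ p) by (nia || (intros i Hi Hne; apply Hterm; [lia|now right])).
    rewrite (proj2 (pow1_leading z o Hz p)). reflexivity.
Qed.

Lemma comp_gen_g_order g q z1 z2 z3 o : vord g = Fin (INR q) -> (1 <= o)%nat ->
  (forall j, (j < o)%nat -> z2 j = C0) -> z2 o <> C0 -> comp (gen_g g) z1 z2 z3 (q * o)%nat <> C0.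
Proof.
  intros Eg Ho Hz Hzo. destruct (vord_Fin_inv g q Eg) as [Gq Gl].
  rewrite comp_gen_g, (proj2 (series_comp_leading g z2 o q Ho Hz Gl)).
  apply Cmul_neq0, Cpow_neq0; auto.
Qed.

Lemma comp_gen_f_order f p z1 z2 z3 m : vord f = Fin (INR p) -> (1 <= m)%nat -> at_origin z1 z2 z3 ->
  (forall j, (j < m)%nat -> z1 j = C0) -> z1 m <> C0 -> mul1 z2 z3 (p * m)%nat = C0 ->
  comp (gen_f f) z1 z2 z3 (p * m)%nat <> C0.
Proof.
  intros Ef Hm Hz H1 H1m H23. destruct (vord_Fin_inv f p Ef) as [Fp Fl].
  rewrite comp_gen_f, (proj2 (series_comp_leading f z1 m p Hm H1 Fl)), H23 by auto.
  replace (Csub _ C0) with (Cmul (f p) (Cpow (z1 m) p)) by ring.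
  apply Cmul_neq0, Cpow_neq0; auto.
Qed.

Lemma T1_at_z3_le f g p q z1 z2 z3 : vord f = Fin (INR p) -> vord g = Fin (INR q) ->
  (1 <= p)%nat -> in_Gamma z1 z2 z3 ->
  ERle (T1_at [gen_f f; gen_g g; lin (C0, C0, C1)] z1 z2 z3) (Fin (INR (Nat.max p q))).
Proof.
  intros Ef Eg Hp HG. destruct (in_Gamma_order _ _ _ HG) as [m [Hm [Hz [Hnz Ev]]]].
  pose proof (in_Gamma_at_origin _ _ _ HG) as Hz0.
  apply (T1_at_le_witness _ _ _ _ m); auto.
  destruct (classic (exists j, (j <= p * m)%nat /\ z3 j <> C0)) as [[j [Hj H3]]|Z3].
  { exists (lin (C0, C0, C1)), j. split; [apply in_ideal_3|split; [|nia]].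
    rewrite comp_lin by auto. simpl. replace (Cadd _ _) with (z3 j) by ring. exact H3. }
  assert (Z3' : forall j, (j < S (p * m))%nat -> z3 j = C0)
    by (intros j Hj; apply NNPP; intro; apply Z3; exists j; split; auto; lia).
  destruct (classic (z2 m = C0)) as [H2|H2].
  - assert (H1 : z1 m <> C0).
    { destruct Hnz as [A|[A|A]]; [exact A|contradiction|elim A; apply Z3'; nia]. }
    exists (gen_f f), (p * m)%nat. split; [apply in_ideal_1|split; [|nia]].
    apply comp_gen_f_order; auto. { intros; apply Hz; auto. }
    apply (mul1_vanish _ _ (S m) (S (p * m))); auto; [|lia].
    intros j Hj. destruct (Nat.eq_dec j m) as [->|]; auto. apply Hz; lia.
  - exists (gen_g g), (q * m)%nat. split; [apply in_ideal_2|split; [|nia]].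
    apply comp_gen_g_order; auto. intros; apply Hz; auto.
Qed.

Lemma T1_at_generic_le f g p q a z1 z2 z3 : vord f = Fin (INR p) -> vord g = Fin (INR q) ->
  (3 <= p)%nat -> (2 <= q)%nat -> snd a <> C0 -> in_Gamma z1 z2 z3 ->
  ERle (T1_at [gen_f f; gen_g g; lin a] z1 z2 z3) (Fin (INR (q * (p - 1)))).
Proof.
  intros Ef Eg Hp Hq Ha HG. destruct (in_Gamma_order _ _ _ HG) as [m [Hm [Hz [Hnz Ev]]]].
  pose proof (in_Gamma_at_origin _ _ _ HG) as Hz0.
  destruct p as [|r]; [lia|]. replace (S r - 1)%nat with r by lia.
  assert (Hqr : (2 <= q * r)%nat) by nia.
  apply (T1_at_le_witness _ _ _ _ m); auto.
  destruct (classic (exists j, (j <= r * m)%nat /\ z2 j <> C0)) as [[j [Hj H2j]]|NE].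
  { destruct (first_nonzero z2 j) as [o [Ho [H2o Hlt]]]; auto. apply Hz0.
    exists (gen_g g), (q * o)%nat. split; [apply in_ideal_2|split; [|nia]].
    apply comp_gen_g_order; auto; lia. }
  assert (Z2 : forall j, (j < S (r * m))%nat -> z2 j = C0)
    by (intros j Hj; apply NNPP; intro; apply NE; exists j; split; auto; lia).
  destruct (classic (z1 m = C0)) as [H1|H1].
  - assert (H3 : z3 m <> C0).
    { destruct Hnz as [A|[A|A]]; [contradiction|elim A; apply Z2; nia|exact A]. }
    exists (lin a), m. split; [apply in_ideal_3|split; [|nia]].
    rewrite comp_lin, H1, (Z2 m) by (auto; nia).
    replace (Cadd _ _) with (Cmul (snd a) (z3 m)) by ring. apply Cmul_neq0; auto.
  - exists (gen_f f), (S r * m)%nat. split; [apply in_ideal_1|split; [|nia]].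
    apply comp_gen_f_order; auto. { intros; apply Hz; auto. }
    apply (mul1_vanish _ _ (S (r * m)) m); auto; [|nia].
    intros; apply Hz; auto.
Qed.

(** * A curve realising the lower bound *)

Lemma mul1_var1 b k : mul1 var1 b k = match k with O => C0 | S k' => b k' end.
Proof.
  unfold mul1. destruct k.
  - simpl. unfold var1; simpl. ring.
  - rewrite (csum_only _ 1) by (lia || (intros i _ Hne; unfold var1;
      rewrite (proj2 (Nat.eqb_neq i 1) Hne); ring)).
    unfold var1; simpl. rewrite Nat.sub_0_r. ring.
Qed.

Lemma pow1_var1 i k : pow1 var1 i k = if Nat.eqb k i then C1 else C0.
Proof.
  revert k; induction i; intros k.
  - destruct k; reflexivity.
  - simpl. rewrite mul1_var1. destruct k; [reflexivity|apply IHi].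
Qed.

Section LowerCurve.
Variables (f : ps1) (p : nat) (a1 a2 a3 : C).
Hypothesis Hp : (3 <= p)%nat.
Hypothesis Hf : forall j, (j < p)%nat -> f j = C0.
Hypothesis Ha1 : a1 <> C0.
Hypothesis Ha3 : a3 <> C0.

Definition solve_step (n : nat) (w : nat -> C) : C :=
  Cmul (Copp (Cinv a1)) (Cadd (Cmul a3 (f (S n)))
     (Cmul a2 (csum (S (S n)) (fun i => Cmul (w i) (w (S n - i)%nat))))).

(* [coef_prefix n] holds the coefficients of degree < n, and zeros above. *)
Fixpoint coef_prefix (n : nat) : nat -> C :=
  match n with
  | O => fun _ => C0
  | S n' => fun i => if Nat.ltb i n' then coef_prefix n' i
                     else if Nat.eqb i n' then solve_step n' (coef_prefix n') else C0
  end.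

Definition coef (n : nat) : C := solve_step n (coef_prefix n).

Lemma coef_prefix_eq n i : coef_prefix n i = if Nat.ltb i n then coef i else C0.
Proof.
  revert i; induction n; intros i. reflexivity.
  simpl. rewrite IHn. destruct (Nat.ltb i n) eqn:E1.
  - apply Nat.ltb_lt in E1. replace (Nat.ltb i (S n)) with true; auto. symmetry; apply Nat.ltb_lt; lia.
  - apply Nat.ltb_ge in E1. destruct (Nat.eqb i n) eqn:E2.
    + apply Nat.eqb_eq in E2; subst. replace (Nat.ltb n (S n)) with true; auto.
      symmetry; apply Nat.ltb_lt; lia.
    + apply Nat.eqb_neq in E2. replace (Nat.ltb i (S n)) with false; auto.
      symmetry; apply Nat.ltb_ge; lia.
Qed.

Lemma coef_low i : (i < p - 1)%nat -> coef i = C0.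
Proof.
  induction i as [i IH] using (well_founded_induction Wf_nat.lt_wf). intros Hi.
  unfold coef, solve_step. rewrite Hf by lia.
  rewrite csum_0. ring.
  intros j Hj. rewrite !coef_prefix_eq. destruct (Nat.ltb j i) eqn:E.
  - apply Nat.ltb_lt in E. rewrite IH by lia. ring.
  - ring.
Qed.

Lemma coef_equation n : Cadd (Cmul a3 (f (S n))) (Cadd (Cmul a1 (coef n))
   (Cmul a2 (csum (S (S n)) (fun i => Cmul (coef i) (coef (S n - i)%nat))))) = C0.
Proof.
  (* the two extreme terms of the convolution vanish because coef 0 = 0 *)
  assert (Hs : csum (S (S n)) (fun i => Cmul (coef_prefix n i) (coef_prefix n (S n - i)%nat)) =
               csum (S (S n)) (fun i => Cmul (coef i) (coef (S n - i)%nat))).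
  { apply csum_ext; intros i Hi. rewrite !coef_prefix_eq.
    destruct (Nat.lt_ge_cases i n) as [L1|L1]; destruct (Nat.lt_ge_cases (S n - i) n) as [L2|L2].
    - rewrite (proj2 (Nat.ltb_lt _ _) L1), (proj2 (Nat.ltb_lt _ _) L2). auto.
    - rewrite (coef_low i) by lia. destruct (Nat.ltb i n), (Nat.ltb (S n - i) n); ring.
    - rewrite (coef_low (S n - i)) by lia. destruct (Nat.ltb i n), (Nat.ltb (S n - i) n); ring.
    - rewrite (coef_low (S n - i)) by lia. destruct (Nat.ltb i n), (Nat.ltb (S n - i) n); ring. }
  change (coef n) with (solve_step n (coef_prefix n)). unfold solve_step. rewrite Hs.
  set (X := Cadd (Cmul a3 (f (S n)))
              (Cmul a2 (csum (S (S n)) (fun i => Cmul (coef i) (coef (S n - i)%nat))))).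
  replace (Cmul a1 (Cmul (Copp (Cinv a1)) X)) with (Copp (Cmul (Cmul a1 (Cinv a1)) X)) by ring.
  rewrite Cmul_Cinv by auto. unfold X. ring.
Qed.

Variable D : nat.

(* [curve2] truncates at degree D the power series solution z2 of a3 f(t) + z2 (a1 t + a2 z2) = 0,
   which spares us proving that this solution converges. *)
Definition curve2 : ps1 := fun k => if Nat.leb k D then coef k else C0.
Definition curve3 : ps1 := fun k => Copp (Cmul (Cinv a3) (Cadd (Cmul a1 (var1 k)) (Cmul a2 (curve2 k)))).

Lemma curve2_low j : (j < p - 1)%nat -> curve2 j = C0.
Proof. intros; unfold curve2. destruct (Nat.leb j D); auto. apply coef_low; auto. Qed.

Lemma curve_at_origin : at_origin var1 curve2 curve3.
Proof.
  assert (Z2 : curve2 O = C0) by (apply curve2_low; lia).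
  repeat split; auto. unfold curve3. rewrite Z2. unfold var1; simpl. ring.
Qed.

Lemma curve_in_Gamma : in_Gamma var1 curve2 curve3.
Proof.
  destruct curve_at_origin as (V1 & V2 & V3).
  assert (C2 : forall k, (D < k)%nat -> curve2 k = C0).
  { intros k Hk; unfold curve2. replace (Nat.leb k D) with false; auto.
    symmetry; apply Nat.leb_gt; auto. }
  repeat split; auto using conv1_var1.
  - apply (conv1_of_finite _ D); auto.
  - apply (conv1_of_finite _ (S D)). intros k Hk. unfold curve3. rewrite C2 by lia. unfold var1.
    rewrite (proj2 (Nat.eqb_neq k 1)) by lia. ring.
  - exists 1%nat. left. exact var1_1.
Qed.

Lemma curve_vcurve : vcurve var1 curve2 curve3 = Fin (INR 1).
Proof.
  destruct (in_Gamma_order _ _ _ curve_in_Gamma) as [m [Hm [Hz [_ E]]]]. rewrite E.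
  destruct (Nat.eq_dec m 1) as [->|]; auto.
  elim var1_1. apply (Hz 1%nat). lia.
Qed.

Lemma comp_lin_curve k : comp (lin (a1, a2, a3)) var1 curve2 curve3 k = C0.
Proof.
  rewrite comp_lin by apply curve_at_origin. simpl. unfold curve3.
  set (Y := Cadd (Cmul a1 (var1 k)) (Cmul a2 (curve2 k))).
  replace (Cadd (Cmul a1 (var1 k)) (Cadd (Cmul a2 (curve2 k)) (Cmul a3 (Copp (Cmul (Cinv a3) Y)))))
    with (Csub Y (Cmul (Cmul a3 (Cinv a3)) Y)) by (unfold Y; ring).
  rewrite Cmul_Cinv by auto. ring.
Qed.

Lemma comp_gen_g_curve g q : (forall j, (j < q)%nat -> g j = C0) ->
  forall k, (k < q * (p - 1))%nat -> comp (gen_g g) var1 curve2 curve3 k = C0.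
Proof.
  intros Hg k Hk. rewrite comp_gen_g.
  apply (proj1 (series_comp_leading g curve2 (p - 1) q ltac:(lia) curve2_low Hg)); auto.
Qed.

Lemma comp_gen_f_curve k : (k <= D)%nat -> comp (gen_f f) var1 curve2 curve3 k = C0.
Proof.
  intros Hk. rewrite comp_gen_f by apply curve_at_origin.
  rewrite (csum_only _ k (fun i => Cmul (f i) (pow1 var1 i k))) by (try lia; intros i Hi Hne;
     rewrite pow1_var1, (proj2 (Nat.eqb_neq k i)) by auto; ring).
  rewrite pow1_var1, Nat.eqb_refl.
  assert (E : mul1 curve2 curve3 k = Copp (Cmul (Cinv a3)
               (Cadd (Cmul a1 (mul1 curve2 var1 k)) (Cmul a2 (mul1 curve2 curve2 k))))).
  { unfold mul1 at 2 3. rewrite !csum_mul_l, <- csum_add, csum_mul_l, <- csum_opp.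
    unfold mul1, curve3. apply csum_ext; intros; ring. }
  rewrite E, mul1_comm, mul1_var1.
  assert (Hq : forall i, (i <= k)%nat -> curve2 i = coef i).
  { intros i Hi; unfold curve2. replace (Nat.leb i D) with true; auto.
    symmetry; apply Nat.leb_le; lia. }
  assert (S2 : mul1 curve2 curve2 k = csum (S k) (fun i => Cmul (coef i) (coef (k - i)%nat))).
  { unfold mul1. apply csum_ext; intros. rewrite !Hq by lia. auto. }
  rewrite S2. destruct k as [|n].
  - rewrite Hf by lia. simpl. rewrite coef_low by lia. ring.
  - rewrite Hq by lia.
    set (T := csum (S (S n)) (fun i => Cmul (coef i) (coef (S n - i)%nat))).
    assert (EQ := coef_equation n). fold T in EQ.
    replace (Csub (Cmul (f (S n)) C1) (Copp (Cmul (Cinv a3) (Cadd (Cmul a1 (coef n)) (Cmul a2 T)))))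
      with (Cadd (Cmul (Csub C1 (Cmul a3 (Cinv a3))) (f (S n)))
                 (Cmul (Cinv a3) (Cadd (Cmul a3 (f (S n))) (Cadd (Cmul a1 (coef n)) (Cmul a2 T)))))
      by ring.
    rewrite EQ, Cmul_Cinv by auto. ring.
Qed.

End LowerCurve.

Lemma T1_generic_ge f g p q a1 a2 a3 : vord f = Fin (INR p) -> vord g = Fin (INR q) -> (3 <= p)%nat ->
  a1 <> C0 -> a3 <> C0 ->
  ERle (Fin (INR (q * (p - 1)))) (T1 [gen_f f; gen_g g; lin (a1, a2, a3)]).
Proof.
  intros Ef Eg Hp H1 H3. destruct (vord_Fin_inv f p Ef) as [_ Fl]. destruct (vord_Fin_inv g q Eg) as [_ Gl].
  set (D := (q * (p - 1))%nat).
  pose proof (curve_in_Gamma f p a1 a2 a3 Hp Fl D) as HG.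
  apply T1_ge. exists var1, (curve2 f a1 a2 a3 D), (curve3 f a1 a2 a3 D). split; auto.
  apply T1_at_ge; auto.
  intros h Hh. rewrite (curve_vcurve f p) by auto.
  assert (Hvord : ERle (Fin (INR D)) (vord (comp h var1 (curve2 f a1 a2 a3 D) (curve3 f a1 a2 a3 D)))).
  { apply vord_ge, (in_ideal_comp_vanish _ _ _ h _ _ _ _ (curve_at_origin f p a1 a2 a3 Hp Fl D) Hh).
    - intros; apply (comp_gen_f_curve f p); auto. unfold D in *; lia.
    - intros; apply (comp_gen_g_curve f p _ _ _ Hp Fl D g q); auto.
    - intros; apply (comp_lin_curve f p); auto. }
  revert Hvord. destruct (vord (comp h _ _ _)) as [r|]; simpl; auto. rewrite Rdiv_1_r. auto.
Qed.

(** * Generic linear forms *)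

Definition Ccont0 (F : R -> C) : Prop :=
  continuity_pt (fun e => fst (F e)) 0 /\ continuity_pt (fun e => snd (F e)) 0.

Lemma Ccont0_const x : Ccont0 (fun _ => x).
Proof. split; apply continuity_pt_const; intros a b; auto. Qed.

Lemma Ccont0_add F G : Ccont0 F -> Ccont0 G -> Ccont0 (fun e => Cadd (F e) (G e)).
Proof. intros [A B] [D E]; split; simpl; apply continuity_pt_plus; auto. Qed.

Lemma Ccont0_mul F G : Ccont0 F -> Ccont0 G -> Ccont0 (fun e => Cmul (F e) (G e)).
Proof.
  intros [A B] [D E]; split; simpl.
  - apply continuity_pt_minus; apply continuity_pt_mult; auto.
  - apply continuity_pt_plus; apply continuity_pt_mult; auto.
Qed.

Lemma Ccont0_pow F n : Ccont0 F -> Ccont0 (fun e => Cpow (F e) n).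
Proof. intros H; induction n; simpl. apply Ccont0_const. apply Ccont0_mul; auto. Qed.

Lemma Ccont0_shift x : Ccont0 (fun e => Cadd x (e, 0)).
Proof.
  assert (Hc : forall c, continuity_pt (fun _ => c) 0)
    by (intros; apply continuity_pt_const; intros a b; reflexivity).
  split; simpl; apply continuity_pt_plus; auto.
  exact (derivable_continuous_pt id 0 (derivable_pt_id 0)).
Qed.

Lemma Ccont0_peval P (A : R -> C3) : Ccont0 (fun e => fst (fst (A e))) ->
  Ccont0 (fun e => snd (fst (A e))) -> Ccont0 (fun e => snd (A e)) ->
  Ccont0 (fun e => peval P (A e)).
Proof.
  intros H1 H2 H3. induction P as [|[c [[i j] l]] P IH]; unfold peval in *; simpl.
  - apply Ccont0_const.
  - apply Ccont0_add; auto. apply Ccont0_mul; [apply Ccont0_const|].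
    apply Ccont0_mul; [apply Ccont0_pow; auto|]. apply Ccont0_mul; apply Ccont0_pow; auto.
Qed.

Lemma Ccont0_neq0 F : Ccont0 F -> F 0 <> C0 -> exists d, 0 < d /\ forall e, 0 < e < d -> F e <> C0.
Proof.
  intros [H1 H2] HF.
  assert (Hre : forall (u : R -> R), continuity_pt u 0 -> u 0 <> 0 ->
             exists d, 0 < d /\ forall e, 0 < e < d -> u e <> 0).
  { intros u Hc Hn. destruct (Hc (Rabs (u 0))) as [d [Hd H]]. apply Rabs_pos_lt; auto.
    exists d; split; auto. intros e He Hz.
    assert (L : R_dist (u e) (u 0) < Rabs (u 0)).
    { apply H. split. split. constructor. lra. simpl. unfold R_dist. rewrite Rminus_0_r, Rabs_right; lra. }
    unfold R_dist in L. rewrite Hz, Rminus_0_l, Rabs_Ropp in L. lra. }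
  destruct (Req_dec (fst (F 0)) 0) as [Z|Z].
  - assert (Z2 : snd (F 0) <> 0) by (intro Z2; apply HF; apply C_ext; auto).
    destruct (Hre _ H2 Z2) as [d [Hd H]]. exists d; split; auto.
    intros e He E. apply (H e He). rewrite E. reflexivity.
  - destruct (Hre _ H1 Z) as [d [Hd H]]. exists d; split; auto.
    intros e He E. apply (H e He). rewrite E. reflexivity.
Qed.

Lemma avoid_two_points d x y : 0 < d -> exists e, 0 < e < d /\ e <> x /\ e <> y.
Proof.
  intros Hd.
  assert (Hc : forall e, 0 < e < d -> e <> x -> e <> y -> exists e, 0 < e < d /\ e <> x /\ e <> y)
    by eauto.
  destruct (Req_dec (d / 2) x), (Req_dec (d / 2) y), (Req_dec (d / 3) x), (Req_dec (d / 3) y);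
    try (now apply (Hc (d / 2)); lra); try (now apply (Hc (d / 3)); lra);
    apply (Hc (d / 4)); lra.
Qed.

Lemma peval_neq0_perturb P (a' : C3) : peval P a' <> C0 ->
  exists a : C3, peval P a <> C0 /\ fst (fst a) <> C0 /\ snd a <> C0.
Proof.
  intros Hn. destruct a' as [[x1 x2] x3].
  set (A := fun e : R => (Cadd x1 (e, 0), x2, Cadd x3 (e, 0)) : C3).
  assert (A0 : A 0 = (x1, x2, x3)) by (unfold A; f_equal; [f_equal|]; apply C_ext; simpl; ring).
  destruct (Ccont0_neq0 (fun e => peval P (A e))) as [d [Hd H]].
  { apply Ccont0_peval; simpl; auto using Ccont0_shift, Ccont0_const. }
  { rewrite A0; auto. }
  destruct (avoid_two_points d (- fst x1) (- fst x3) Hd) as [e [He [E1 E3]]].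
  exists (A e). split; [apply H; auto|]. simpl.
  split; intro E; apply (f_equal fst) in E; simpl in E; lra.
Qed.

Lemma beta2_eq gs N :
  (forall a : C3, fst (fst a) <> C0 -> snd a <> C0 -> T1 (gs ++ [lin a]) = N) -> beta2 gs = N.
Proof.
  intros Hgen. unfold beta2.
  destruct (epsilon_spec (inhabits PInf) (generic_value2 gs)) as [Ps [_ [[a' [_ [P [HP Hn]]]] HT]]].
  - (* the open set {a1 a3 <> 0} witnesses that N is a generic value *)
    exists N, [[(C1, (1%nat, 0%nat, 1%nat))]]. split; [repeat constructor; exists 2%nat; repeat constructor|].
    split.
    + exists (C1, C0, C1). split.
      * intro E. apply (f_equal (fun a : C3 => fst (fst a))) in E. exact (C1_neq0 E).
      * exists [(C1, (1%nat, 0%nat, 1%nat))]. split; [left; auto|].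
        unfold peval; simpl. replace (Cadd _ C0) with C1 by ring. exact C1_neq0.
    + intros [[a1 a2] a3] _ [P [[<-|[]] HP]]. unfold peval in HP; simpl in HP.
      apply Hgen; simpl; intro E; apply HP; rewrite E; ring.
  - destruct (peval_neq0_perturb P a' Hn) as [a [Ha [H1 H3]]].
    rewrite <- (HT a); auto.
    + intros ->. exact (H1 eq_refl).
    + exists P; auto.
Qed.

Lemma Tq2_le gs a : ERle (Tq 2 gs) (T1 (gs ++ [lin a])).
Proof.
  unfold Tq. apply (ER_inf_spec _ 0).
  - intros s [ws [_ ->]]. apply T1_ge0.
  - exists [a]. split; reflexivity.
Qed.

Theorem mainTheorem9 (f g : ps1) (p q : nat) :
  conv1 f -> conv1 g ->
  vord f = Fin (INR p) -> (3 <= p)%nat ->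
  vord g = Fin (INR q) -> (2 <= q)%nat ->
  ERle (Tq 2 [gen_f f; gen_g g]) (Fin (INR (Nat.max p q))) /\
  beta2 [gen_f f; gen_g g] = Fin (INR (Nat.max p (q * (p - 1)))) /\
  Nat.max p (q * (p - 1)) = (q * (p - 1))%nat.
Proof.
  intros _ _ Ef Hp Eg Hq.
  assert (Hmax : Nat.max p (q * (p - 1)) = (q * (p - 1))%nat) by (apply Nat.max_r; nia).
  split; [|split; [rewrite Hmax|exact Hmax]].
  - eapply ERle_trans; [apply (Tq2_le _ (C0, C0, C1))|].
    apply T1_le. intros; apply (T1_at_z3_le f g p q); auto. lia.
  - apply beta2_eq. intros [[a1 a2] a3] H1 H3. simpl in H1, H3.
    apply ERle_antisym.
    + apply T1_le. intros; apply (T1_at_generic_le f g p q); auto.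
    + apply (T1_generic_ge f g p q); auto.
Qed.
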